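(* Let $H_p>0$ and let $\gamma_g:\mathbb{R}\to\mathbb{R}$ be an even, $H_p$-periodic, strictly positive function that is integrable over a period. Let $n$ be an even integer. Consider the array of $n+1$ junctions indexed by $i\in\{-n/2,\dots,n/2\}$, with positions $a_i = 2\pi i/H_p$ and strengths $$d_{-i}=d_i=\frac{1}{H_p}\int_0^{H_p}\gamma_g(H)\cos(Ha_i)\,dH,\qquad i\in\{0,\dots,n/2\}.$$ Then the maximal current of this array in the magnetic approximation is $$\gamma_{max}(H)=\Big|d_0+2\sum_{i=1}^{n/2} d_i\cos(Ha_i)\Big|\qquad\text{for all } H\in\mathbb{R},$$ i.e. the absolute value of the truncation (keeping the harmonics $\cos(2\pi iH/H_p)$, $0\le i\le n/2$) of the cosine Fourier series of $\gamma_g$.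
   Context: An array of Josephson junctions (in the magnetic approximation) is described by finitely many real positions $a_1<\dots<a_m$ and real strengths $d_1,\dots,d_m$ (a negative $d_i$ corresponds to a so-called $\pi$-junction). For an applied magnetic field $H\in\mathbb{R}$, the maximal current of the array in the magnetic approximation is $$\gamma_{max}(H)=\max_{c\in\mathbb{R}}\Big|\sum_{i=1}^m d_i\sin(Ha_i+c)\Big|,$$ and $c_{max}(H)$ denotes a value of $c$ at which this maximum is attained. *)

From HB Require Import structures.
From mathcomp Require Import all_boot all_order all_algebra.
From mathcomp Require Import all_classical all_reals all_analysis.
Set Implicit Arguments. Unset Strict Implicit. Unset Printing Implicit Defensive.
Import Order.TTheory GRing.Theory Num.Theory.
Local Open Scope ring_scope.
Local Open Scope classical_set_scope.

Definition array_sum {R : realType} (m : nat) (a d : 'I_m -> R) (H c : R) : R :=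
  \sum_(i < m) d i * sin (H * a i + c).

Definition is_gamma_max {R : realType} (m : nat) (a d : 'I_m -> R) (H v : R) : Prop :=
  (forall c : R, `|array_sum a d H c| <= v) /\
  (exists c : R, `|array_sum a d H c| = v).

Definition jpos {R : realType} (Hp : R) (i : int) : R := 2 * pi * i%:~R / Hp.

Definition jcoef {R : realType} (Hp : R) (gg : R -> R) (k : nat) : R :=
  Hp^-1 * Rintegral (@lebesgue_measure R) `[0, Hp]
            (fun H => gg H * cos (H * jpos Hp k%:Z)).

(* The array of n+1 junctions: the j-th junction (j : 'I_(n+1)) has index
   i = j - n/2 in {-n/2,..,n/2}; position a_i and strength d_{|i|} (d_{-i} = d_i). *)
Definition junc_index (n : nat) (j : 'I_(n.+1)) : int := (nat_of_ord j)%:Z - (n./2)%:Z.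

Definition array_pos {R : realType} (Hp : R) (n : nat) (j : 'I_(n.+1)) : R :=
  jpos Hp (junc_index j).

Definition array_str {R : realType} (Hp : R) (gg : R -> R) (n : nat) (j : 'I_(n.+1)) : R :=
  jcoef Hp gg `|junc_index j|%N.

From HB Require Import structures.
From mathcomp Require Import all_boot all_order all_algebra.
From mathcomp Require Import all_classical all_reals all_analysis.
From mathcomp Require Import zify ring lra.
Import Order.TTheory GRing.Theory Num.Theory.
Local Open Scope ring_scope.
Local Open Scope classical_set_scope.

(* In an array symmetric about its centre (odd positions, even strengths) the
   junctions i and -i contribute 2 d_i sin c cos (H a_i), so the whole sum is
   sin c times the truncated cosine series S(H); its maximum over c is |S(H)|,
   attained at c = pi/2. *)

Lemma big_ord_centered (V : zmodType) (F : int -> V) (k : nat) :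
  \sum_(j < k.*2.+1) F (j%:Z - k%:Z) =
  F 0 + \sum_(1 <= i < k.+1) (F i%:Z + F (- i%:Z)).
Proof.
rewrite -(big_mkord xpredT (fun j : nat => F (j%:Z - k%:Z))).
elim: k => [|k IHk]; first by rewrite big_nat1 big_geq // !addr0.
rewrite doubleS big_nat_recl // big_nat_recr //= [in RHS]big_nat_recr //=.
have shift (j : nat) : j.+1%:Z - k.+1%:Z = j%:Z - k%:Z by lia.
have top : (k.*2).+2%:Z - k.+1%:Z = k.+1%:Z by lia.
have bot : 0%:Z - k.+1%:Z = - k.+1%:Z by lia.
under eq_bigr do rewrite shift.
by rewrite IHk top bot [LHS]addrC !addrA.
Qed.

Lemma sinD_add_sinB {R : realType} (x y : R) :
  sin (x + y) + sin (x - y) = 2 * sin x * cos y.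
Proof. by rewrite sinD sinB; ring. Qed.

Lemma big_ord_symmetric_array {R : realType} (a : int -> R) (d : nat -> R)
    (k : nat) (H c : R) :
  (forall i, a (- i) = - a i) ->
  \sum_(j < k.*2.+1) d `|j%:Z - k%:Z|%N * sin (H * a (j%:Z - k%:Z) + c) =
  sin c * (d 0%N + 2 * \sum_(1 <= i < k.+1) d i * cos (H * a i%:Z)).
Proof.
move=> a_odd.
have a0 : a 0 = 0 by have := a_odd 0; rewrite oppr0; lra.
rewrite (big_ord_centered _ (fun i => d `|i|%N * sin (H * a i + c))).
rewrite a0 mulr0 add0r mulrDr mulr_sumr mulr_sumr mulrC; congr (_ + _).
apply: eq_bigr => i _.
rewrite abszN absz_nat a_odd mulrN -mulrDr [H * a i + c]addrC [- _ + c]addrC.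
by rewrite sinD_add_sinB; ring.
Qed.

Lemma is_gamma_max_sin_mul {R : realType} (m : nat) (a d : 'I_m -> R) (H S : R) :
  (forall c, array_sum a d H c = sin c * S) -> is_gamma_max a d H `|S|.
Proof.
move=> sumE; split=> [c|]; last by exists (pi / 2); rewrite sumE sin_pihalf mul1r.
by rewrite sumE normrM ler_piMl // sin_max.
Qed.

Lemma jpos_opp {R : realType} (Hp : R) (i : int) : jpos Hp (- i) = - jpos Hp i.
Proof. by rewrite /jpos rmorphN /= mulrN mulNr. Qed.

Theorem mainTheorem1 (R : realType) (Hp : R) (gg : R -> R) (n : nat) :
  0 < Hp ->
  (forall H : R, gg (- H) = gg H) ->
  (forall H : R, gg (H + Hp) = gg H) ->
  (forall H : R, 0 < gg H) ->
  (@lebesgue_measure R).-integrable `[0, Hp] (EFin \o gg) ->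
  ~~ odd n ->
  forall H : R,
    is_gamma_max (array_pos Hp (n:=n)) (array_str Hp gg (n:=n)) H
      `| jcoef Hp gg 0 +
         2 * \sum_(1 <= i < (n./2).+1) jcoef Hp gg i * cos (H * jpos Hp i%:Z) |.
Proof.
move=> _ _ _ _ _ n_even H.
have {n_even} [k ->] : exists k, n = k.*2 by exists n./2; rewrite even_halfK.
apply: is_gamma_max_sin_mul => c.
rewrite /array_sum /array_str /array_pos /junc_index doubleK.
by rewrite (big_ord_symmetric_array _ _ _ _ _ (jpos_opp Hp)).
Qed.
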